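(* Let $\Omega_1,\Omega_2\subset\mathbb{C}$ and $Y\subsetneq\mathbb{C}$ be domains. Suppose $f:\Omega_1\to\Omega_2$ is holomorphic with $f(a)=b$ and $f(t)\neq b$ for all $t\in\Omega_1\setminus\{a\}$. Then for every $c\in Y$, $$\mathscr{C}_{\Omega_2}^{Y,c}(f(a))\,|f'(a)|\leq \mathscr{C}_{\Omega_1}^{Y,c}(a).$$
   Context: $\mathbb{D}=\{z\in\mathbb{C}:|z|<1\}$. For domains $\Omega\subset\mathbb{C}$, $Y\subsetneq\mathbb{C}$, and points $w\in\Omega$, $s\in Y$, let $\mathcal{H}^s_w(\Omega,Y)$ be the set of holomorphic maps $h:\Omega\to Y$ with $h(w)=s$ and $h(z)\neq s$ for all $z\in\Omega\setminus\{w\}$. For a domain $Y\subsetneq\mathbb{C}$ and $v\in Y$, the Hurwitz density is $\eta_Y(v)=2/r_Y(v)$, where $r_Y(v)=\max\{h'(0): h:\mathbb{D}\to Y \text{ holomorphic},\ h(0)=v,\ h(z)\neq v \text{ for } z\in\mathbb{D}\setminus\{0\},\ h'(0)>0\}$. The Carathéodory density of the Hurwitz metric of $\Omega$ relative to $Y$ is $\mathscr{C}_{\Omega}^{Y,s}(w)=\sup\{\eta_Y(h(w))|h'(w)| : h\in\mathcal{H}^s_w(\Omega,Y)\}$, defined to be $0$ if $\mathcal{H}^s_w(\Omega,Y)=\emptyset$. *)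

From Stdlib Require Import Reals ClassicalEpsilon.
From Coquelicot Require Import Coquelicot.
Open Scope R_scope.

Definition is_domain (S : C -> Prop) : Prop :=
  (exists z, S z) /\ open S /\
  (forall U V : C -> Prop, open U -> open V ->
     (forall z, S z -> U z \/ V z) ->
     (forall z, S z -> U z -> V z -> False) ->
     (exists z, S z /\ U z) -> (exists z, S z /\ V z) -> False).

Definition unit_disk (z : C) : Prop := Cmod z < 1.

Definition holo_into (Omega Y : C -> Prop) (h : C -> C) : Prop :=
  forall z, Omega z -> Y (h z) /\ exists d : C, is_derive h z d.

Definition Hclass (Omega Y : C -> Prop) (w s : C) (h : C -> C) : Prop :=
  holo_into Omega Y h /\ h w = s /\ (forall z, Omega z -> z <> w -> h z <> s).

Definition hurwitz_r (Y : C -> Prop) (v : C) : Rbar :=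
  Lub_Rbar (fun x : R => exists h : C -> C, exists d : C,
    Hclass unit_disk Y (RtoC 0) v h /\ is_derive h (RtoC 0) d /\
    Im d = 0 /\ 0 < Re d /\ x = Re d).

Definition hurwitz_eta (Y : C -> Prop) (v : C) : R := 2 / real (hurwitz_r Y v).

Definition cara_density (Omega Y : C -> Prop) (s w : C) : Rbar :=
  let A := fun x : R => exists h : C -> C, exists d : C,
      Hclass Omega Y w s h /\ is_derive h w d /\
      x = hurwitz_eta Y (h w) * Cmod d in
  if excluded_middle_informative (exists x, A x) then Lub_Rbar A else Finite 0.

(** Precomposition with [f] maps the class H^c_{f(a)}(Omega2, Y) into
    H^c_a(Omega1, Y): [h \o f] takes the value [c] only at [a] because [f]
    takes the value [f a] only at [a], its derivative at [a] is
    [f'(a) h'(f a)] by the chain rule, and the Hurwitz density is evaluated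
    at the same point [h (f a) = c]. Hence every element of the set whose
    supremum defines the left-hand density, multiplied by [|f'(a)|], belongs
    to the set defining the right-hand one. *)
From Stdlib Require Import Reals Lra ClassicalEpsilon Classical.
From Coquelicot Require Import Coquelicot.

(** [is_derive_comp] needs the inner function differentiable in the
    absolute-value module of [C_AbsRing], not in [C_NormedModule]. *)
Lemma is_derive_C_AbsRing (f : C -> C) (z l : C) :
  @is_derive C_AbsRing C_NormedModule f z l ->
  @is_derive C_AbsRing (AbsRing_NormedModule C_AbsRing) f z l.
Proof.
  intros [[Hadd Hscal [M [HM HMf]]] Hdom]. split.
  - split; [exact Hadd | exact Hscal | exists M; split; assumption].
  - exact Hdom.
Qed.

Lemma is_derive_C_comp (f g : C -> C) (z df dg : C) :
  is_derive g z dg -> is_derive f (g z) df ->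
  is_derive (fun x => f (g x)) z (dg * df)%C.
Proof.
  intros Hg Hf. exact (is_derive_comp f g z df dg Hf (is_derive_C_AbsRing g z dg Hg)).
Qed.

Lemma holo_into_comp (Omega1 Omega2 Y : C -> Prop) (f h : C -> C) :
  holo_into Omega1 Omega2 f -> holo_into Omega2 Y h ->
  holo_into Omega1 Y (fun z => h (f z)).
Proof.
  intros Hf Hh z Oz.
  destruct (Hf z Oz) as [O2fz [df Hdf]].
  destruct (Hh (f z) O2fz) as [Yhfz [dh Hdh]].
  split; [exact Yhfz |].
  exists (df * dh)%C. exact (is_derive_C_comp h f z dh df Hdf Hdh).
Qed.

Lemma Hclass_comp (Omega1 Omega2 Y : C -> Prop) (f h : C -> C) (a b c : C) :
  Hclass Omega1 Omega2 a b f -> Hclass Omega2 Y b c h ->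
  Hclass Omega1 Y a c (fun z => h (f z)).
Proof.
  intros [Hf [fa f_ne]] [Hh [hb h_ne]]. split; [| split].
  - exact (holo_into_comp Omega1 Omega2 Y f h Hf Hh).
  - rewrite fa. exact hb.
  - intros z Oz za. apply h_ne; [apply Hf; exact Oz | exact (f_ne z Oz za)].
Qed.

Definition Lub_Rbar0 (A : R -> Prop) : Rbar :=
  if excluded_middle_informative (exists x, A x) then Lub_Rbar A else Finite 0.

Definition cara_values (Omega Y : C -> Prop) (s w : C) (x : R) : Prop :=
  exists h : C -> C, exists d : C,
    Hclass Omega Y w s h /\ is_derive h w d /\ x = hurwitz_eta Y (h w) * Cmod d.

Lemma cara_density_Lub_Rbar0 (Omega Y : C -> Prop) (s w : C) :
  cara_density Omega Y s w = Lub_Rbar0 (cara_values Omega Y s w).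
Proof. reflexivity. Qed.

Lemma Lub_Rbar_ge (A : R -> Prop) (x : R) : A x -> Rbar_le x (Lub_Rbar A).
Proof. exact (proj1 (Lub_Rbar_correct A) x). Qed.

Lemma real_Lub_Rbar_ge0 (A : R -> Prop) :
  (forall x, A x -> 0 <= x) -> 0 <= real (Lub_Rbar A).
Proof.
  intros A_ge0. destruct (classic (exists x, A x)) as [[x Ax] | A_empty].
  - assert (Hx := Lub_Rbar_ge A x Ax). assert (Hx0 := A_ge0 x Ax).
    destruct (Lub_Rbar A); simpl in *; lra.
  - assert (H : Rbar_le (Lub_Rbar A) m_infty).
    { apply (proj2 (Lub_Rbar_correct A)). intros x Ax. exfalso. eauto. }
    destruct (Lub_Rbar A); simpl in *; [contradiction | contradiction | lra].
Qed.

Lemma Lub_Rbar0_ge0 (A : R -> Prop) :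
  (forall x, A x -> 0 <= x) -> Rbar_le 0 (Lub_Rbar0 A).
Proof.
  intros A_ge0. unfold Lub_Rbar0.
  destruct (excluded_middle_informative _) as [[x Ax] | _]; [| simpl; lra].
  apply Rbar_le_trans with x; [exact (A_ge0 x Ax) | exact (Lub_Rbar_ge A x Ax)].
Qed.

Lemma Lub_Rbar_scale_le (A B : R -> Prop) (m : R) :
  0 < m -> (forall y, B y -> A (y * m)) ->
  Rbar_le (Rbar_mult (Lub_Rbar B) m) (Lub_Rbar A).
Proof.
  intros Hm BA.
  assert (Hmult_m_infty : Rbar_mult m_infty m = m_infty).
  { apply is_Rbar_mult_unique, is_Rbar_mult_m_infty_pos. exact Hm. }
  assert (ubA := Lub_Rbar_ge A).
  assert (lubB := proj2 (Lub_Rbar_correct B)).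
  destruct (Lub_Rbar A) as [s | |].
  - assert (HB : Rbar_le (Lub_Rbar B) (s / m)).
    { apply lubB. intros y By. specialize (ubA _ (BA y By)). simpl in *.
      apply Rmult_le_reg_r with m; [exact Hm |].
      replace (s / m * m) with s by (field; lra). exact ubA. }
    destruct (Lub_Rbar B) as [r | |]; simpl in HB; try contradiction.
    + simpl. replace s with (s / m * m) by (field; lra).
      apply Rmult_le_compat_r; lra.
    + rewrite Hmult_m_infty. exact I.
  - destruct (Rbar_mult (Lub_Rbar B) m); exact I.
  - assert (HB : Rbar_le (Lub_Rbar B) m_infty).
    { apply lubB. intros y By. destruct (ubA _ (BA y By)). }
    destruct (Lub_Rbar B); try contradiction.
    rewrite Hmult_m_infty. exact I.
Qed.

Lemma Lub_Rbar0_scale_le (A B : R -> Prop) (m : R) :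
  (forall x, A x -> 0 <= x) -> 0 <= m -> (forall y, B y -> A (y * m)) ->
  Rbar_le (Rbar_mult (Lub_Rbar0 B) m) (Lub_Rbar0 A).
Proof.
  intros A_ge0 Hm BA.
  destruct (Req_dec m 0) as [-> | Hm0].
  { rewrite Rbar_mult_0_r. exact (Lub_Rbar0_ge0 A A_ge0). }
  unfold Lub_Rbar0 at 1.
  destruct (excluded_middle_informative _) as [[y By] | _].
  - unfold Lub_Rbar0. destruct (excluded_middle_informative _) as [_ | A_empty].
    + apply Lub_Rbar_scale_le; [lra | exact BA].
    + exfalso. exact (A_empty (ex_intro _ _ (BA y By))).
  - rewrite Rbar_mult_0_l. exact (Lub_Rbar0_ge0 A A_ge0).
Qed.

Lemma hurwitz_eta_ge0 (Y : C -> Prop) (v : C) : 0 <= hurwitz_eta Y v.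
Proof.
  unfold hurwitz_eta, hurwitz_r.
  match goal with |- context [Lub_Rbar ?A] => assert (Hr := real_Lub_Rbar_ge0 A) end.
  destruct Hr as [Hr | Hr].
  - intros x (h & d & _ & _ & _ & Hd & ->). lra.
  - apply Rle_mult_inv_pos; lra.
  - (* [real] sends an infinite r_Y to 0, and [/ 0 = 0] in Stdlib. *)
    rewrite <- Hr. unfold Rdiv. rewrite Rinv_0. lra.
Qed.

Lemma cara_values_ge0 (Omega Y : C -> Prop) (s w : C) (x : R) :
  cara_values Omega Y s w x -> 0 <= x.
Proof.
  intros (h & d & _ & _ & ->).
  apply Rmult_le_pos; [apply hurwitz_eta_ge0 | apply Cmod_ge_0].
Qed.

Lemma cara_values_comp (Omega1 Omega2 Y : C -> Prop) (f : C -> C) (a b f'a c : C) (y : R) :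
  Hclass Omega1 Omega2 a b f -> is_derive f a f'a ->
  cara_values Omega2 Y c b y -> cara_values Omega1 Y c a (y * Cmod f'a).
Proof.
  intros Hf Hdf (h & d & Hh & Hdh & ->).
  assert (fa : f a = b) by apply Hf.
  exists (fun z => h (f z)), (f'a * d)%C. split; [| split].
  - exact (Hclass_comp Omega1 Omega2 Y f h a b c Hf Hh).
  - rewrite <- fa in Hdh. exact (is_derive_C_comp h f a d f'a Hdf Hdh).
  - rewrite fa, Cmod_mult. ring.
Qed.

Theorem theorem3p11 (Omega1 Omega2 Y : C -> Prop) (f : C -> C) (a b f'a c : C) :
  is_domain Omega1 -> is_domain Omega2 -> is_domain Y ->
  (exists z : C, ~ Y z) ->
  Hclass Omega1 Omega2 a b f ->
  is_derive f a f'a ->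
  Y c ->
  Rbar_le (Rbar_mult (cara_density Omega2 Y c (f a)) (Finite (Cmod f'a)))
          (cara_density Omega1 Y c a).
Proof.
  intros _ _ _ _ Hf Hdf _.
  assert (fa : f a = b) by apply Hf.
  rewrite fa, !cara_density_Lub_Rbar0.
  apply Lub_Rbar0_scale_le.
  - apply cara_values_ge0.
  - apply Cmod_ge_0.
  - intros y. exact (cara_values_comp Omega1 Omega2 Y f a b f'a c y Hf Hdf).
Qed.
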